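(* Let $n\ge 3$ and let $C_n=(v_0,\dots,v_{n-1})$ be the cycle. In the Random Majority Model (RMM) on $C_n$, the only winning set is the set of all nodes. In the Majority Model (MM) on $C_n$, the minimum size of a winning set equals $\lfloor n/2\rfloor+1$.
   Context: A coloring is a map from the nodes to $\{b,w\}$. In MM, all nodes update simultaneously: a node adopts the color strictly more frequent among its neighbors in the previous round and keeps its color in case of a tie. RMM is the same except that in case of a tie the node chooses blue or white independently and uniformly at random. A node set $S$ is a winning set if, whenever all nodes of $S$ are blue (resp. white) initially, the process eventually reaches the coloring in which all nodes are blue (resp. white), regardless of the initial colors of the nodes outside $S$ and of all random choices (in RMM). *)

From mathcomp Require Import all_boot.
Set Implicit Arguments. Unset Strict Implicit. Unset Printing Implicit Defensive.

(* Colors: true = blue (b), false = white (w). *)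

Section Models.
Variable T : finType.
Variable e : rel T.

Definition nblue (c : T -> bool) (v : T) : nat := #|[set u | e v u && c u]|.
Definition nwhite (c : T -> bool) (v : T) : nat := #|[set u | e v u && ~~ c u]|.

Definition mm_step (c : T -> bool) : T -> bool := fun v =>
  if nwhite c v < nblue c v then true
  else if nblue c v < nwhite c v then false
  else c v.

(* One round of RMM: as MM, but on a tie node v takes the colour coin v
   (the outcome of its independent fair coin flip in this round). *)
Definition rmm_step (coin : T -> bool) (c : T -> bool) : T -> bool := fun v =>
  if nwhite c v < nblue c v then true
  else if nblue c v < nwhite c v then false
  else coin v.

Definition mm_run (c0 : T -> bool) (t : nat) : T -> bool := iter t mm_step c0.

(* Colouring after t rounds of RMM, where coins t v is the random choice
   available to node v in round t (a realization of all random choices). *)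
Fixpoint rmm_run (coins : nat -> T -> bool) (c0 : T -> bool) (t : nat)
  : T -> bool :=
  match t with
  | 0 => c0
  | t'.+1 => rmm_step (coins t') (rmm_run coins c0 t')
  end.

Definition mm_winning (S : {set T}) : Prop :=
  forall (col : bool) (c0 : T -> bool),
    (forall v, v \in S -> c0 v = col) ->
    exists t, forall v, mm_run c0 t v = col.

(* S is a winning set in RMM: the same, regardless also of all random
   choices (i.e. for every realization of the tie-breaking coins). *)
Definition rmm_winning (S : {set T}) : Prop :=
  forall (col : bool) (c0 : T -> bool) (coins : nat -> T -> bool),
    (forall v, v \in S -> c0 v = col) ->
    exists t, forall v, rmm_run coins c0 t v = col.

End Models.

Definition cycle_adj (n : nat) : rel 'I_n :=
  fun i j => (val j == (val i).+1 %% n) || (val i == (val j).+1 %% n).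
Arguments cycle_adj n : clear implicits.

From mathcomp Require Import all_boot zify.

(* On a cycle a node sees two neighbours, so an MM step gives each node the
   majority colour of itself and its two neighbours, while in RMM a node whose
   neighbours disagree takes the colour of its coin.
   RMM: if v is outside S, colour everything but v blue and let every coin say
   white; the successor of a white node then always turns white, so some node
   stays white forever.
   MM: two adjacent nodes of equal colour keep it forever, and an alternating
   colouring flips at every round.  Since MM is monotone and commutes with
   swapping the colours, S is winning iff the colouring "S blue, the rest white"
   eventually becomes all blue.  If #|S| <= n/2 this colouring has two adjacent
   white nodes or is alternating, so S is not winning.  For S = {v_0} together
   with the odd nodes, the blue pair v_0 v_1 spreads by one node on each side
   per round while the nodes outside this arc keep alternating, so after n
   rounds every node is blue. *)

Section MajorityModel.
Variables (T : finType) (e : rel T).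

Lemma nblue_negb (c : T -> bool) v : nblue e (fun u => ~~ c u) v = nwhite e c v.
Proof. by []. Qed.

Lemma nwhite_negb (c : T -> bool) v : nwhite e (fun u => ~~ c u) v = nblue e c v.
Proof. by rewrite /nwhite /nblue; under eq_finset do rewrite negbK. Qed.

Lemma mm_step_negb (c : T -> bool) v :
  mm_step e (fun u => ~~ c u) v = ~~ mm_step e c v.
Proof. by rewrite /mm_step nblue_negb nwhite_negb; case: ltngtP. Qed.

Lemma mm_step_mono (c c' : T -> bool) :
  (forall u, c u ==> c' u) -> forall v, mm_step e c v ==> mm_step e c' v.
Proof.
move=> le_cc' v.
have le_blue : nblue e c v <= nblue e c' v.
  by apply/subset_leq_card/subsetP => u; rewrite !inE => /andP[-> /(implyP (le_cc' u))].
have le_white : nwhite e c' v <= nwhite e c v.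
  apply/subset_leq_card/subsetP => u; rewrite !inE => /andP[-> /=].
  by apply: contra; apply/implyP.
rewrite /mm_step; have := le_cc' v.
by case: (ltngtP (nwhite e c v) (nblue e c v));
  case: (ltngtP (nwhite e c' v) (nblue e c' v)) => //=; lia.
Qed.

Lemma eq_mm_step (c c' : T -> bool) : c =1 c' -> mm_step e c =1 mm_step e c'.
Proof.
move=> eq_cc' v; apply/idP/idP; apply/implyP/mm_step_mono => u;
  by rewrite eq_cc' implybb.
Qed.

Lemma mm_runS (c0 : T -> bool) t : mm_run e c0 t.+1 = mm_step e (mm_run e c0 t).
Proof. by []. Qed.

Lemma mm_run_negb (c0 : T -> bool) t v :
  mm_run e (fun u => ~~ c0 u) t v = ~~ mm_run e c0 t v.
Proof.
elim: t v => [//|t IH] v.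
by rewrite !mm_runS -mm_step_negb; apply: eq_mm_step.
Qed.

Lemma mm_run_ge (f : nat -> T -> bool) (c0 : T -> bool) :
  (forall v, f 0 v ==> c0 v) -> (forall t v, f t.+1 v ==> mm_step e (f t) v) ->
  forall t v, f t v ==> mm_run e c0 t v.
Proof.
move=> le_f0 f_sub; elim=> [//|t IH] v.
apply/implyP => /(implyP (f_sub t v)); apply/implyP.
exact: mm_step_mono.
Qed.

Lemma mm_winningE (S : {set T}) :
  mm_winning e S <-> exists t, forall v, mm_run e (fun u => u \in S) t v.
Proof.
split=> [W | [t blue_t] col c0 S_col]; first exact: W true _ (fun v => id).
pose blue_run := mm_run e (fun u => u \in S).
have run_step t' v : blue_run t'.+1 v ==> mm_step e (blue_run t') v by exact: implybb.
exists t => v; case: col S_col => S_col.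
  apply: (implyP (mm_run_ge blue_run c0 _ run_step t v)) (blue_t v) => u.
  by apply/implyP => /S_col.
apply/negbTE; rewrite -mm_run_negb.
apply: (implyP (mm_run_ge blue_run _ _ run_step t v)) (blue_t v) => u.
by apply/implyP => /S_col ->.
Qed.

Lemma rmm_winning_setT : rmm_winning e setT.
Proof. by move=> col c0 coins S_col; exists 0 => v; apply: S_col; rewrite inE. Qed.

End MajorityModel.

Lemma sum_odd_ord m : \sum_(i < m) odd i = m./2.
Proof. by elim: m => [|m IH]; rewrite ?big_ord0 // big_ord_recr /= IH uphalf_half addnC. Qed.

Lemma cycle_adjE n (x y : 'I_n) :
  cycle_adj n x y = (y == ordS x) || (y == ord_pred x).
Proof.
congr orb; apply/eqP/eqP => [x_succ_y | ->]; last by rewrite -{1}(ord_predK x).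
by rewrite -[y]ordSK; congr ord_pred; apply: val_inj.
Qed.

Section Cycle.
Variable n : nat.
Hypothesis n_gt2 : 2 < n.
Local Notation adj := (cycle_adj n).

Lemma val_ordS (x : 'I_n) : val (ordS x) = if x.+1 == n then 0 else x.+1.
Proof.
rewrite /=; case: eqP => [-> | ne]; first exact: modnn.
by rewrite modn_small //; have := ltn_ord x; lia.
Qed.

Lemma val_ord_pred (x : 'I_n) : val (ord_pred x) = if x == 0 :> nat then n.-1 else x.-1.
Proof.
rewrite /=; have := ltn_ord x; case: eqP => [-> | ne] lt_xn /=; first by rewrite modn_small; lia.
by rewrite -subn1 -addnBAC ?lt0n ?modnDr ?modn_small ?subn1 //; [lia | apply/eqP].
Qed.

Lemma ordS_neq_ord_pred (x : 'I_n) : ordS x != ord_pred x.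
Proof.
apply/eqP => /(congr1 val); rewrite val_ordS val_ord_pred; have := ltn_ord x.
by case: (x.+1 =P n) => /= ?; case: (x =P 0 :> nat) => /= ?; lia.
Qed.

Lemma nblue_cycle (c : 'I_n -> bool) x :
  nblue adj c x = c (ordS x) + c (ord_pred x).
Proof.
rewrite /nblue -sum1dep_card big_mkcondr.
rewrite (eq_bigl (mem (ordS x |: [set ord_pred x]))) => [|u]; last first.
  by rewrite cycle_adjE !inE.
rewrite big_setU1 ?inE ?ordS_neq_ord_pred // big_set1 /=.
by case: (c _); case: (c _).
Qed.

Lemma mm_step_cycle (c : 'I_n -> bool) x :
  mm_step adj c x = (1 < c (ord_pred x) + c x + c (ordS x)).
Proof.
rewrite /mm_step -nblue_negb !nblue_cycle.
by case: (c (ordS x)); case: (c x); case: (c (ord_pred x)).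
Qed.

Lemma rmm_step_cycle coin (c : 'I_n -> bool) x :
  rmm_step adj coin c x = if c (ordS x) == c (ord_pred x) then c (ordS x) else coin x.
Proof.
rewrite /rmm_step -nblue_negb !nblue_cycle.
by case: (c (ordS x)); case: (c (ord_pred x)).
Qed.

Lemma rmm_step_cycle_white (c : 'I_n -> bool) w :
  ~~ c w -> ~~ rmm_step adj (fun _ => false) c (ordS w).
Proof. by rewrite rmm_step_cycle ordSK => /negbTE ->; case: (c _). Qed.

Lemma rmm_winning_cycle S : rmm_winning adj S <-> S = setT.
Proof.
split=> [W | ->]; last exact: rmm_winning_setT.
apply/setP => v; rewrite inE; apply: contraT => vNS.
pose c0 u := u != v.
have [t blue_t] : exists t, forall u, rmm_run adj (fun _ _ => false) c0 t u.
  by apply: W => u uS; apply: contraNneq vNS => <-.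
suff [w white_w] : exists w, ~~ rmm_run adj (fun _ _ => false) c0 t w.
  by rewrite blue_t in white_w.
elim: t {blue_t} => [|t [w white_w]]; first by exists v; rewrite /= negbK.
by exists (ordS w); apply: rmm_step_cycle_white.
Qed.

Lemma mm_step_cycle_pair (c : 'I_n -> bool) x :
  c (ordS x) = c x -> mm_step adj c x = c x /\ mm_step adj c (ordS x) = c x.
Proof.
move=> eq_x; rewrite !mm_step_cycle ordSK eq_x.
by split; case: (c x); case: (c _).
Qed.

Lemma mm_run_cycle_pair (c0 : 'I_n -> bool) x : c0 (ordS x) = c0 x ->
  forall t, mm_run adj c0 t x = c0 x /\ mm_run adj c0 t (ordS x) = c0 x.
Proof.
move=> eq_x; elim=> [//|t [run_x run_Sx]].
have [step_x step_Sx] := @mm_step_cycle_pair _ x (etrans run_Sx (esym run_x)).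
by rewrite !mm_runS step_x step_Sx run_x.
Qed.

Lemma mm_step_cycle_alternating (c : 'I_n -> bool) :
  (forall x, c (ordS x) = ~~ c x) -> forall x, mm_step adj c x = ~~ c x.
Proof.
move=> alt x; have alt_pred : c (ord_pred x) = ~~ c x.
  by rewrite -[in RHS](ord_predK x) alt negbK.
by rewrite mm_step_cycle alt alt_pred; case: (c x).
Qed.

Lemma mm_run_cycle_alternating (c0 : 'I_n -> bool) :
  (forall x, c0 (ordS x) = ~~ c0 x) ->
  forall t x, mm_run adj c0 t (ordS x) = ~~ mm_run adj c0 t x.
Proof.
move=> alt; elim=> [//|t IH] x.
by rewrite !mm_runS !mm_step_cycle_alternating // IH.
Qed.

Lemma cycle_alternating_of_card (S : {set 'I_n}) :
  (forall x, x \notin S -> ordS x \in S) -> #|S| <= n./2 ->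
  forall x, (ordS x \in S) = (x \notin S).
Proof.
move=> succ_notin small x.
have sub : [set ordS y | y in ~: S] \subset S.
  by apply/subsetP => _ /imsetP[y yNS ->]; apply: succ_notin; rewrite inE in yNS.
have card_im : #|[set ordS y | y in ~: S]| = #|S|.
  apply/eqP; rewrite eqn_leq (subset_leq_card sub) card_imset; last exact: ordS_inj.
  by rewrite /= -(leq_add2l #|S|) cardsC card_ord addnn -geq_half_double.
have /(subset_cardP card_im) im_S := sub.
by rewrite -im_S mem_imset ?inE //; exact: ordS_inj.
Qed.

Lemma mm_winning_cycle_card S : mm_winning adj S -> n./2 < #|S|.
Proof.
rewrite mm_winningE => -[t blue_t]; rewrite ltnNge; apply/negP => small.
case: (boolP [exists x, (x \notin S) && (ordS x \notin S)]).
  case/existsP => x /andP[xNS SxNS].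
  have eq_x : (ordS x \in S) = (x \in S) by rewrite (negbTE xNS) (negbTE SxNS).
  have [+ _] := mm_run_cycle_pair (fun u => u \in S) x eq_x t.
  by rewrite blue_t (negbTE xNS).
move=> /existsPn pairless.
have alt : forall x, (ordS x \in S) = ~~ (x \in S).
  by apply: cycle_alternating_of_card small => x xNS; have := pairless x; rewrite xNS negbK.
have := mm_run_cycle_alternating (fun u => u \in S) alt t (Ordinal (ltnW (ltnW n_gt2))).
by rewrite !blue_t.
Qed.

Definition cycle_seed : {set 'I_n} := [set x : 'I_n | (x == 0 :> nat) || odd x].

(* Nodes surely blue at round t when starting from [cycle_seed]: the arc
   [n - t, t + 1] through v_0 v_1, and the nodes whose parity differs from t. *)
Definition cycle_front t (x : 'I_n) : bool := [|| x <= t.+1, n - t <= x | odd (x + t)].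

Lemma cycle_front_step t x : cycle_front t.+1 x -> mm_step adj (cycle_front t) x.
Proof.
rewrite mm_step_cycle /cycle_front val_ordS val_ord_pred; have := ltn_ord x.
by case: (x.+1 =P n) => /= ?; case: (x =P 0 :> nat) => /= ?; lia.
Qed.

Lemma card_cycle_seed : #|cycle_seed| = n./2.+1.
Proof.
have n_gt0 : 0 < n := ltnW (ltnW n_gt2).
have -> : cycle_seed = Ordinal n_gt0 |: [set x : 'I_n | odd x].
  by apply/setP => x; rewrite !inE -val_eqE.
rewrite cardsU1 inE /= add1n -sum1dep_card big_mkcond -sum_odd_ord /=.
by congr _.+1; apply: eq_bigr => i _; case: odd.
Qed.

Lemma cycle_seed_winning : mm_winning adj cycle_seed.
Proof.
rewrite mm_winningE; exists n => v.
apply: (implyP (mm_run_ge _ adj cycle_front _ _ _ n v)).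
- by move=> x; apply/implyP; rewrite /cycle_front inE; have := ltn_ord x; lia.
- by move=> t x; apply/implyP/cycle_front_step.
- by rewrite /cycle_front; have := ltn_ord v; lia.
Qed.

End Cycle.

Theorem theorem3p2 (n : nat) (hn : 3 <= n) :
  (forall S : {set 'I_n}, rmm_winning (cycle_adj n) S <-> S = setT) /\
  ((exists S : {set 'I_n}, mm_winning (cycle_adj n) S /\ #|S| = n./2.+1) /\
   (forall S : {set 'I_n}, mm_winning (cycle_adj n) S -> n./2.+1 <= #|S|)).
Proof.
split; first exact: rmm_winning_cycle.
split; last exact: mm_winning_cycle_card.
by exists (cycle_seed n); split; [exact: cycle_seed_winning | exact: card_cycle_seed].
Qed.
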